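(* Let $\mathbf{I}$ be a $d$-system of ideals in a ring $R$ and $A:=\mathscr{A}(R,\mathbf{I})$. The chain of idempotent ideals $0=J_d\subset J_{d-1}\subset\cdots\subset J_1\subset J_0=A$ has the property that, for every $1\le i\le d$, the left $A/J_i$-module $J_{i-1}/J_i$ is projective, and there is a ring isomorphism $e_i(A/J_i)e_i\cong R/I_{i,i+1}$.
   Context: A $d$-system of ideals in $R$ is a collection $\{I_{ij}\mid1\le i,j\le d+1\}$ of two-sided ideals with $I_{ij}I_{jk}\subset I_{ik}$ and $I_{ij}=R$ for $i\ge j$. $\mathscr{A}(R,\mathbf{I}):=\bigoplus_{1\le i,j\le d}I_{ij}/I_{i,d+1}$ with multiplication $(x+I_{i,d+1})(y+I_{k,d+1})=\delta_{jk}(xy+I_{i,d+1})\in I_{il}/I_{i,d+1}$ for $x\in I_{ij},y\in I_{kl}$. Put $e_k:=1+I_{k,d+1}\in I_{kk}/I_{k,d+1}$ for $1\le k\le d$, $f_j:=\sum_{k>j}e_k$ for $0\le j\le d$ ($f_0=1$, $f_d=0$), and $J_j:=Af_jA$. *)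

From HB Require Import structures.
From mathcomp Require Import all_boot all_order all_algebra.
From Stdlib Require Import ClassicalEpsilon.
Set Implicit Arguments. Unset Strict Implicit. Unset Printing Implicit Defensive.
Import GRing.Theory.
Local Open Scope ring_scope.
Local Open Scope quotient_scope.

Definition pb (P : Prop) : bool :=
  if excluded_middle_informative P then true else false.

Lemma pbP (P : Prop) : reflect P (pb P).
Proof. by rewrite /pb; case: excluded_middle_informative => h; constructor. Qed.

Record tsideal (S : pzRingType) := TSIdeal {
  tsmem :> S -> Prop;
  tsideal0 : tsmem 0;
  tsidealB : forall x y, tsmem x -> tsmem y -> tsmem (x - y);
  tsidealMl : forall a x, tsmem x -> tsmem (a * x);
  tsidealMr : forall a x, tsmem x -> tsmem (x * a) }.

Section TSIdealTheory.
Variables (S : pzRingType) (J : tsideal S).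
Lemma tsidealN x : J x -> J (- x).
Proof. by move=> h; rewrite -sub0r; apply: tsidealB => //; apply: tsideal0. Qed.
Lemma tsidealD x y : J x -> J y -> J (x + y).
Proof. by move=> hx hy; rewrite -[y]opprK; apply: tsidealB => //; apply: tsidealN. Qed.
Lemma tsidealBC x y : J (x - y) -> J (y - x).
Proof. by move=> h; rewrite -opprB; apply: tsidealN. Qed.
Lemma tsideal_sum (I : Type) (r : seq I) (P : pred I) (F : I -> S) :
  (forall i, P i -> J (F i)) -> J (\sum_(i <- r | P i) F i).
Proof.
move=> h; apply: (big_ind J) => //; [exact: tsideal0 | exact: tsidealD].
Qed.
End TSIdealTheory.

Section QuotRing.
Variables (S : pzRingType) (J : tsideal S).

Definition qequiv (x y : S) := pb (J (x - y)).

Lemma qequivE x y : qequiv x y = pb (J (x - y)). Proof. by []. Qed.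

Lemma qequiv_is_equiv : equiv_class_of qequiv.
Proof.
split=> [x|x y|y x z]; rewrite !qequivE.
- by rewrite subrr; apply/pbP; apply: tsideal0.
- by apply/pbP/pbP=> h; rewrite -opprB; apply: tsidealN.
- move=> /pbP h1 /pbP h2; apply/pbP.
  by rewrite -[x](addrNK y) -addrA; apply: tsidealD.
Qed.

Canonical qequiv_equiv := EquivRelPack qequiv_is_equiv.
Canonical qequiv_encModRel := defaultEncModRel qequiv.

Definition qring := {eq_quot qequiv}.
HB.instance Definition _ : EqQuotient S qequiv qring := EqQuotient.on qring.
HB.instance Definition _ := Choice.on qring.

Definition qzero : qring := lift_cst qring 0.
Definition qadd := lift_op2 qring +%R.
Definition qopp := lift_op1 qring -%R.
Canonical pi_qzero_morph := PiConst qzero.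

Lemma equiv_qpi x y : qequiv x y = (x == y %[mod qring]).
Proof. by rewrite piE. Qed.

Lemma repr_pi x : J (repr (\pi_qring x) - x).
Proof.
have /eqP : \pi_qring (repr (\pi_qring x)) = \pi_qring x by rewrite reprK.
by rewrite piE qequivE => /pbP.
Qed.

Lemma pi_qopp : {morph \pi_qring : x / - x >-> qopp x}.
Proof.
move=> x; unlock qopp; apply/eqP; rewrite piE qequivE; apply/pbP.
by rewrite opprK addrC; apply: repr_pi.
Qed.
Canonical pi_qopp_morph := PiMorph1 pi_qopp.

Lemma pi_qadd : {morph \pi_qring : x y / x + y >-> qadd x y}.
Proof.
move=> x y /=; unlock qadd; apply/eqP; rewrite piE qequivE; apply/pbP.
apply: tsidealBC.
have -> : repr (\pi_qring x) + repr (\pi_qring y) - (x + y) =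
   (repr (\pi_qring x) - x) + (repr (\pi_qring y) - y).
  by rewrite opprD addrACA.
by apply: tsidealD; apply: repr_pi.
Qed.
Canonical pi_qadd_morph := PiMorph2 pi_qadd.

Lemma qaddA : associative qadd.
Proof. by move=> x y z; rewrite -[x]reprK -[y]reprK -[z]reprK !piE addrA. Qed.
Lemma qaddC : commutative qadd.
Proof. by move=> x y; rewrite -[x]reprK -[y]reprK !piE addrC. Qed.
Lemma qadd0 : left_id qzero qadd.
Proof. by move=> x; rewrite -[x]reprK !piE add0r. Qed.
Lemma qaddN : left_inverse qzero qopp qadd.
Proof. by move=> x; rewrite -[x]reprK !piE addNr. Qed.

HB.instance Definition _ := GRing.isZmodule.Build qring qaddA qaddC qadd0 qaddN.

Definition qone : qring := lift_cst qring 1.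
Definition qmul := lift_op2 qring *%R.
Canonical pi_qone_morph := PiConst qone.

Lemma pi_qmul : {morph \pi_qring : x y / x * y >-> qmul x y}.
Proof.
move=> x y; unlock qmul; apply/eqP; rewrite piE qequivE; apply/pbP.
apply: tsidealBC.
set x' := repr _; set y' := repr _.
have -> : x' * y' - x * y = (x' - x) * y' + x * (y' - y).
  by rewrite mulrBl mulrBr addrA addrNK.
by apply: tsidealD; [apply: tsidealMr | apply: tsidealMl]; apply: repr_pi.
Qed.
Canonical pi_qmul_morph := PiMorph2 pi_qmul.

Lemma qmulA : associative qmul.
Proof. by move=> x y z; rewrite -[x]reprK -[y]reprK -[z]reprK !piE mulrA. Qed.
Lemma qmul1 : left_id qone qmul.
Proof. by move=> x; rewrite -[x]reprK !piE mul1r. Qed.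
Lemma qmulr1 : right_id qone qmul.
Proof. by move=> x; rewrite -[x]reprK !piE mulr1. Qed.
Lemma qmulDl : left_distributive qmul +%R.
Proof.
move=> x y z; rewrite -[x]reprK -[y]reprK -[z]reprK.
by rewrite /GRing.add /= !piE mulrDl.
Qed.
Lemma qmulDr : right_distributive qmul +%R.
Proof.
move=> x y z; rewrite -[x]reprK -[y]reprK -[z]reprK.
by rewrite /GRing.add /= !piE mulrDr.
Qed.

HB.instance Definition _ := GRing.Zmodule_isPzRing.Build qring
  qmulA qmul1 qmulr1 qmulDl qmulDr.

Definition qpi : S -> qring := \pi_qring.

Lemma qpiP x y : (qpi x = qpi y) <-> J (x - y).
Proof.
rewrite /qpi; split => [/eqP|h]; first by rewrite piE qequivE => /pbP.
by apply/eqP; rewrite piE qequivE; apply/pbP.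
Qed.

End QuotRing.

Section QuotMorph.
Variables (S : pzRingType) (J : tsideal S).
Lemma qpiD x y : qpi J (x + y) = qpi J x + qpi J y.
Proof. by rewrite /qpi [RHS]/GRing.add /= piE. Qed.
Lemma qpiM x y : qpi J (x * y) = qpi J x * qpi J y.
Proof. by rewrite /qpi [RHS]/GRing.mul /= piE. Qed.
Lemma qpiN x : qpi J (- x) = - qpi J x.
Proof. by rewrite /qpi [RHS]/GRing.opp /= piE. Qed.
Lemma qpi0 : qpi J 0 = 0.
Proof. by rewrite /qpi [RHS]/GRing.zero /= piE. Qed.
Lemma qpi_surj (y : qring J) : exists x, qpi J x = y.
Proof. by exists (repr y); rewrite /qpi reprK. Qed.
End QuotMorph.

Section GenIdeal.
Variables (S : pzRingType) (x : S).
Definition genmem (a : S) : Prop :=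
  exists s : seq (S * S), a = \sum_(p <- s) p.1 * x * p.2.
Lemma gen0 : genmem 0. Proof. by exists [::]; rewrite big_nil. Qed.
Lemma genB a b : genmem a -> genmem b -> genmem (a - b).
Proof.
move=> [s ->] [t ->]; exists (s ++ [seq (- p.1, p.2) | p <- t]).
by rewrite big_cat big_map /= -sumrN; congr (_ + _); apply: eq_bigr => p _;
  rewrite !mulNr.
Qed.
Lemma genMl c a : genmem a -> genmem (c * a).
Proof.
move=> [s ->]; exists [seq (c * p.1, p.2) | p <- s].
by rewrite big_map mulr_sumr; apply: eq_bigr => p _; rewrite !mulrA.
Qed.
Lemma genMr c a : genmem a -> genmem (a * c).
Proof.
move=> [s ->]; exists [seq (p.1, p.2 * c) | p <- s].
by rewrite big_map mulr_suml; apply: eq_bigr => p _; rewrite !mulrA.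
Qed.
Definition genideal : tsideal S := TSIdeal gen0 genB genMl genMr.
End GenIdeal.

Section ImageIdeal.
Variables (S : pzRingType) (J K : tsideal S).
Definition imgmem (y : qring J) : Prop := exists2 a, K a & qpi J a = y.
Lemma img0 : imgmem 0. Proof. by exists 0; [apply: tsideal0 | apply: qpi0]. Qed.
Lemma imgB a b : imgmem a -> imgmem b -> imgmem (a - b).
Proof.
move=> [u hu <-] [v hv <-]; exists (u - v); first exact: tsidealB.
by rewrite qpiD qpiN.
Qed.
Lemma imgMl c a : imgmem a -> imgmem (c * a).
Proof.
move=> [u hu <-]; have [c' <-] := qpi_surj c.
by exists (c' * u); [apply: tsidealMl | rewrite qpiM].
Qed.
Lemma imgMr c a : imgmem a -> imgmem (a * c).
Proof.
move=> [u hu <-]; have [c' <-] := qpi_surj c.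
by exists (u * c'); [apply: tsidealMr | rewrite qpiM].
Qed.
Definition imgideal : tsideal (qring J) := TSIdeal img0 imgB imgMl imgMr.
End ImageIdeal.

Section IdealModule.
Variables (S : pzRingType) (L : tsideal S).
Definition Lpred : {pred S} := fun x => pb (L x).
Lemma Lpred_zmod : zmod_closed Lpred.
Proof.
split; first by apply/pbP; apply: tsideal0.
by move=> x y /pbP hx /pbP hy; apply/pbP; apply: tsidealB.
Qed.
HB.instance Definition _ := GRing.isZmodClosed.Build S Lpred Lpred_zmod.
Record idealmod := IdealMod { imval :> S; _ : Lpred imval }.
HB.instance Definition _ := [isSub for imval].
HB.instance Definition _ := [Choice of idealmod by <:].
HB.instance Definition _ := [SubChoice_isSubZmodule of idealmod by <:].
Lemma iscale_subproof (a : S) (m : idealmod) : Lpred (a * val m).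
Proof. by case: m => m h /=; apply/pbP; apply: tsidealMl; apply/pbP. Qed.
Definition iscale a m := IdealMod (iscale_subproof a m).
Lemma iscaleA a b m : iscale a (iscale b m) = iscale (a * b) m.
Proof. by apply: val_inj; rewrite /= mulrA. Qed.
Lemma iscale1 : left_id 1 iscale.
Proof. by move=> m; apply: val_inj; rewrite /= mul1r. Qed.
Lemma iscaleDr : right_distributive iscale +%R.
Proof. by move=> a m n; apply: val_inj; rewrite /= mulrDr. Qed.
Lemma iscaleDl m : {morph iscale^~ m : a b / a + b}.
Proof. by move=> a b; apply: val_inj; rewrite /= mulrDl. Qed.
HB.instance Definition _ := GRing.Zmodule_isLmodule.Build S idealmod
  iscaleA iscale1 iscaleDr iscaleDl.
End IdealModule.

Record idempotent (S : pzRingType) := Idempotent {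
  idem_val :> S; idem_idem : idem_val * idem_val = idem_val }.

Section Corner.
Variables (S : pzRingType) (e0 : idempotent S).
Local Notation e := (idem_val e0).
Definition cpred : {pred S} := fun x : S => e * x * e == x.
Lemma cpred_zmod : zmod_closed cpred.
Proof.
split; first by rewrite unfold_in /cpred /= mulr0 mul0r.
by move=> x y; rewrite !unfold_in /cpred /= => /eqP hx /eqP hy; apply/eqP; rewrite mulrBr mulrBl hx hy.
Qed.
HB.instance Definition _ := GRing.isZmodClosed.Build S cpred cpred_zmod.
Record corner := Corner { cval :> S; _ : cpred cval }.
HB.instance Definition _ := [isSub for cval].
HB.instance Definition _ := [Choice of corner by <:].
HB.instance Definition _ := [SubChoice_isSubZmodule of corner by <:].
Lemma cone_subproof : cpred e.
Proof. by rewrite /cpred !idem_idem. Qed.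
Definition cone := Corner cone_subproof.
Lemma cmul_subproof (x y : corner) : cpred (val x * val y).
Proof.
case: x => x hx'; case: y => y hy' /=; have hx := eqP hx'; have hy := eqP hy'; apply/eqP.
have ex : e * x = x by rewrite -{1}hx !mulrA idem_idem.
have ye : y * e = y by rewrite -{1}hy -!mulrA idem_idem !mulrA.
by rewrite !mulrA ex -mulrA ye.
Qed.
Definition cmul x y := Corner (cmul_subproof x y).
Lemma cmulA : associative cmul.
Proof. by move=> x y z; apply: val_inj; rewrite /= mulrA. Qed.
Lemma cmul1 : left_id cone cmul.
Proof. by move=> [x hx']; have hx := eqP hx'; apply: val_inj; rewrite /= -{1}hx !mulrA idem_idem. Qed.
Lemma cmulr1 : right_id cone cmul.
Proof. by move=> [x hx']; have hx := eqP hx'; apply: val_inj; rewrite /= -{1}hx -!mulrA idem_idem !mulrA. Qed.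
Lemma cmulDl : left_distributive cmul +%R.
Proof. by move=> x y z; apply: val_inj; rewrite /= mulrDl. Qed.
Lemma cmulDr : right_distributive cmul +%R.
Proof. by move=> x y z; apply: val_inj; rewrite /= mulrDr. Qed.
HB.instance Definition _ := GRing.Zmodule_isPzRing.Build corner
  cmulA cmul1 cmulr1 cmulDl cmulDr.
End Corner.

(* d-systems of ideals; paper indices 1..d+1 are shifted to 0..d *)
Record dsystem (R : pzRingType) (d : nat) := DSystem {
  dsI : 'I_d.+1 -> 'I_d.+1 -> tsideal R;
  dsI_full : forall i j : 'I_d.+1, (j <= i)%N -> forall x : R, dsI i j x;
  dsI_mul : forall (i j k : 'I_d.+1) (x y : R),
      dsI i j x -> dsI j k y -> dsI i k (x * y) }.

Section DAlgebra.
Variables (R : pzRingType) (d : nat) (D : dsystem R d).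
Local Notation w := (widen_ord (leqnSn d)).
Local Notation I := (dsI D).

Definition lampred : {pred 'M[R]_d} :=
  fun x => pb (forall i j : 'I_d, I (w i) (w j) (x i j)).

Lemma lam_subring : subring_closed lampred.
Proof.
split.
- apply/pbP => i j; rewrite mxE; case: eqP => [->|_].
    by apply: dsI_full.
  by apply: tsideal0.
- move=> x y /pbP hx /pbP hy; apply/pbP => i j; rewrite !mxE.
  by apply: tsidealB.
- move=> x y /pbP hx /pbP hy; apply/pbP => i j; rewrite !mxE.
  apply: tsideal_sum => k _; exact: (dsI_mul (hx i k) (hy k j)).
Qed.
HB.instance Definition _ := GRing.isSubringClosed.Build _ lampred lam_subring.
Record lam := Lam { lamval :> 'M[R]_d; _ : lampred lamval }.
HB.instance Definition _ := [isSub for lamval].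
HB.instance Definition _ := [Choice of lam by <:].
HB.instance Definition _ := GRing.SubChoice_isSubPzRing.Build _ _ lam lam_subring.

Lemma lamP (x : lam) i j : I (w i) (w j) (lamval x i j).
Proof. by case: x => x /= /pbP. Qed.

(* the ideal N = (I_{i,d+1})_{i,j} of lam; A := lam / N *)
Definition Nmem (x : lam) : Prop := forall i j : 'I_d, I (w i) ord_max (lamval x i j).
Lemma N0 : Nmem 0. Proof. by move=> i j; rewrite mxE; apply: tsideal0. Qed.
Lemma NB x y : Nmem x -> Nmem y -> Nmem (x - y).
Proof. by move=> hx hy i j; rewrite /= !mxE; apply: tsidealB. Qed.
Lemma NMl a x : Nmem x -> Nmem (a * x).
Proof.
move=> hx i j; rewrite /= !mxE; apply: tsideal_sum => k _.
exact: (dsI_mul (lamP a i k) (hx k j)).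
Qed.
Lemma NMr a x : Nmem x -> Nmem (x * a).
Proof.
move=> hx i j; rewrite /= !mxE; apply: tsideal_sum => k _.
exact: tsidealMr.
Qed.
Definition Nideal : tsideal lam := TSIdeal N0 NB NMl NMr.

Definition Aalg := qring Nideal.


(* the idempotents e_k (paper index k+1) *)
Lemma delta_lam (k : 'I_d) : lampred (delta_mx k k).
Proof.
apply/pbP => i j; rewrite mxE; case: andP => [[/eqP -> /eqP ->]|_].
  by apply: dsI_full.
by apply: tsideal0.
Qed.
Definition elam (k : 'I_d) : lam := Lam (delta_lam k).
Definition eA (k : 'I_d) : Aalg := qpi Nideal (elam k).

(* f_j = sum of the e_k with (paper) k > j, i.e. 0-based k >= j *)
Definition fA (j : nat) : Aalg := \sum_(k < d | (j <= k)%N) eA k.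

Definition JA (j : nat) : tsideal Aalg := genideal (fA j).

Definition AJ (j : nat) := qring (JA j).

Lemma elam_idem k : elam k * elam k = elam k.
Proof. by apply: val_inj; change (delta_mx k k *m delta_mx k k = delta_mx k k :> 'M[R]_d); rewrite mul_delta_mx. Qed.

Lemma eAJ_idem (t : 'I_d) :
  qpi (JA t.+1) (eA t) * qpi (JA t.+1) (eA t) = qpi (JA t.+1) (eA t).
Proof. by rewrite -qpiM /eA -qpiM elam_idem. Qed.

(* the idempotent e_i of A / J_i, for paper index i = t+1 *)
Definition eAJ (t : 'I_d) : idempotent (AJ t.+1) := Idempotent (eAJ_idem t).

(* the left A/J_i-module J_{i-1}/J_i (paper index i = t+1), realised as the
   image of J_{i-1} in A/J_i *)
Definition Jquot (t : 'I_d) : lmodType (AJ t.+1) :=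
  idealmod (imgideal (JA t.+1) (JA t)).

(* R / I_{i,i+1} for paper index i = t+1 *)
Definition RI (t : 'I_d) := qring (I (w t) (lift ord0 t)).

End DAlgebra.

Definition projective (S : pzRingType) (M : lmodType S) : Prop :=
  forall (N P : lmodType S) (g : {linear N -> P}) (f : {linear M -> P}),
    (forall y : P, exists x : N, g x = y) ->
    exists h : {linear M -> N}, forall m : M, g (h m) = f m.

(* Write L for the ring of d x d matrices x with x_ij in I_ij, so that
   A = L/N with N = (I_{i,d+1})_ij.  The preimage of J_s in L is the ideal of
   the x with x_ij in I_{i,max(j,s+1)}: this ideal contains N and f_s, and
   conversely such an x equals x f_s + sum_{j<=s} x^(j) f_s E_{s+1,j}, where
   x^(j) carries column j of x to column s+1.  Hence, for i = s+1, the module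
   J_{i-1}/J_i has the dual basis E_{ij} (j <= i) with coordinate functions
   [x] |-> [x^(j)], so it is projective; and the classes of the r E_ii fill
   e_i (A/J_i) e_i, with [r E_ii] = 0 exactly when r lies in I_{i,i+1}. *)

From HB Require Import structures.
From mathcomp Require Import all_boot all_order all_algebra.
From mathcomp Require Import zify.
From Stdlib Require Import ClassicalEpsilon.
Set Implicit Arguments.
Unset Strict Implicit.
Unset Printing Implicit Defensive.
Import GRing.Theory.
Local Open Scope ring_scope.

Section QuotientRing.
Variables (S : pzRingType) (J : tsideal S).

Lemma qpiB x y : qpi J (x - y) = qpi J x - qpi J y.
Proof. by rewrite qpiD qpiN. Qed.

Lemma qpi1 : qpi J 1 = 1.
Proof. by rewrite /qpi [RHS]/GRing.one /= piE. Qed.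

Lemma qpi_sum (I : Type) (r : seq I) (P : pred I) (F : I -> S) :
  qpi J (\sum_(i <- r | P i) F i) = \sum_(i <- r | P i) qpi J (F i).
Proof. exact: (big_morph _ (qpiD J) (qpi0 J)). Qed.

Lemma qpiK (y : qring J) : qpi J (repr y) = y.
Proof. by rewrite /qpi reprK. Qed.

Lemma qpi_eq0 x : qpi J x = 0 <-> J x.
Proof. by rewrite -(qpi0 J) qpiP subr0. Qed.

End QuotientRing.

Section DualBasis.
Variables (S : pzRingType) (M : lmodType S) (I : finType) (P : pred I).
Variables (b : I -> M) (coord : I -> M -> S).
Hypothesis coord_scalar : forall i, P i -> scalar (coord i).
Hypothesis coord_expansion : forall m, m = \sum_(i | P i) coord i m *: b i.

Definition dual_comb (N : lmodType S) (n : I -> N) (m : M) : N :=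
  \sum_(i | P i) coord i m *: n i.

Lemma dual_comb_linear (N : lmodType S) (n : I -> N) : linear (dual_comb n).
Proof.
move=> a m m'; rewrite /dual_comb scaler_sumr -big_split /=.
by apply: eq_bigr => i Pi; rewrite coord_scalar // scalerDl scalerA.
Qed.

HB.instance Definition _ (N : lmodType S) (n : I -> N) :=
  GRing.isLinear.Build S M N *:%R (dual_comb n) (dual_comb_linear n).

Lemma dual_basis_projective : projective M.
Proof.
move=> N Q g f g_surj.
pose lift_b i := constructive_indefinite_description _ (g_surj (f (b i))).
exists (dual_comb (fun i => proj1_sig (lift_b i))) => m.
rewrite linear_sum [in RHS](coord_expansion m) linear_sum.
by apply: eq_bigr => i _; rewrite !linearZ /= (proj2_sig (lift_b i)).
Qed.

End DualBasis.

Lemma sum_ord_if_eq (R : nmodType) n (P : pred 'I_n) (c : 'I_n) (F : 'I_n -> R) :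
  \sum_(k < n | P k) (if k == c then F k else 0) = if P c then F c else 0.
Proof.
rewrite -big_mkcondr; case: ifP => Pc.
  rewrite (eq_bigl (pred1 c)) ?big_pred1_eq // => k /=.
  by case: eqP => [->|]; rewrite ?Pc ?andbF.
by rewrite big_pred0 // => k /=; case: eqP => [->|]; rewrite ?Pc ?andbF.
Qed.

Section SingleEntryMatrix.
Variables (R : pzRingType) (n : nat).

Definition single_mx (a b : 'I_n) (r : R) : 'M[R]_n :=
  \matrix_(i, l) if (i == a) && (l == b) then r else 0.

Lemma mulmx_single (A : 'M[R]_n) a b r i l :
  (A *m single_mx a b r) i l = if l == b then A i a * r else 0.
Proof.
rewrite mxE; under eq_bigr => k _ do rewrite mxE.
case: (l == b); last by rewrite big1 // => k _; rewrite andbF mulr0.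
under eq_bigr => k _ do rewrite andbT (fun_if (fun x => A i k * x)) mulr0.
by rewrite (sum_ord_if_eq xpredT).
Qed.

Lemma mul_single_mx (A : 'M[R]_n) a b r i l :
  (single_mx a b r *m A) i l = if i == a then r * A b l else 0.
Proof.
rewrite mxE; under eq_bigr => k _ do rewrite mxE.
case: (i == a) => /=; last by rewrite big1 // => k _; rewrite mul0r.
under eq_bigr => k _ do rewrite (fun_if (fun x => x * A k l)) mul0r.
by rewrite (sum_ord_if_eq xpredT).
Qed.

Lemma delta_single_mx (a b : 'I_n) : delta_mx a b = single_mx a b 1.
Proof. by apply/matrixP => i l; rewrite !mxE; case: ifP. Qed.

End SingleEntryMatrix.

Section Lambda.
Variables (R : pzRingType) (d : nat) (D : dsystem R d).
Local Notation I := (dsI D).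
Local Notation w := (widen_ord (leqnSn d)).
Local Notation N := (Nideal D).

Lemma lam_inj : injective (@lamval _ _ D).
Proof. exact: val_inj. Qed.

Lemma lamvalDE (x y : lam D) i j : lamval (x + y) i j = lamval x i j + lamval y i j.
Proof. exact: mxE. Qed.

Lemma lamvalBE (x y : lam D) i j : lamval (x - y) i j = lamval x i j - lamval y i j.
Proof. by rewrite [LHS]mxE mxE. Qed.

Lemma lamvalME (x y : lam D) i j :
  lamval (x * y) i j = \sum_k lamval x i k * lamval y k j.
Proof. exact: mxE. Qed.

Lemma lamvalM (x y : lam D) : lamval (x * y) = lamval x *m lamval y.
Proof. by []. Qed.

Lemma lamval_sum (J : Type) (r : seq J) (P : pred J) (F : J -> lam D) :
  lamval (\sum_(j <- r | P j) F j) = \sum_(j <- r | P j) lamval (F j).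
Proof. exact: (big_morph (@lamval _ _ D) (fun x y => erefl) erefl). Qed.

Lemma widen_inord (i : 'I_d) : w i = inord i.
Proof. by apply: val_inj; rewrite /= inordK // ltnS ltnW. Qed.

Lemma ord_max_inord : (ord_max : 'I_d.+1) = inord d.
Proof. by apply: val_inj; rewrite /= inordK. Qed.

Lemma dsI_full_inord (a b : nat) x : (b <= a <= d)%N -> I (inord a) (inord b) x.
Proof.
move=> /andP[ba ad]; apply: dsI_full; rewrite !inordK ?ltnS //.
exact: leq_trans ba ad.
Qed.

Lemma dsI_le (i a b : nat) x :
  (a <= b <= d)%N -> I (inord i) (inord b) x -> I (inord i) (inord a) x.
Proof. by move=> ab Ix; rewrite -[x]mulr1; apply: dsI_mul Ix (dsI_full_inord _ ab). Qed.

Lemma lamP_inord (x : lam D) (i j : 'I_d) : I (inord i) (inord j) (lamval x i j).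
Proof. by rewrite -!widen_inord; apply: lamP. Qed.

(* With the 0-based indices of [dsystem], the preimage of [J_s]; see [JA_piE]. *)
Definition Jpre (s : nat) (x : lam D) : Prop :=
  forall i j : 'I_d, I (inord i) (inord (maxn j s)) (lamval x i j).

Section JpreIdeal.
Variables (s : nat) (s_le_d : (s <= d)%N).

Lemma Jpre0 : Jpre s 0.
Proof. by move=> i j; rewrite mxE; apply: tsideal0. Qed.

Lemma JpreB x y : Jpre s x -> Jpre s y -> Jpre s (x - y).
Proof. by move=> Jx Jy i j; rewrite lamvalBE; apply: tsidealB. Qed.

Lemma JpreMl a x : Jpre s x -> Jpre s (a * x).
Proof.
move=> Jx i j; rewrite lamvalM !mxE; apply: tsideal_sum => k _.
exact: dsI_mul (lamP_inord a i k) (Jx k j).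
Qed.

Lemma JpreMr a x : Jpre s x -> Jpre s (x * a).
Proof.
move=> Jx i j; rewrite lamvalM !mxE; apply: tsideal_sum => k _ /=.
have [sj|js] := leqP s j.
  apply: dsI_mul _ (lamP_inord a k j); apply: dsI_le (Jx i k).
  by rewrite leq_maxl geq_max s_le_d ltnW.
apply: dsI_mul (Jx i k) _; apply: dsI_full_inord.
by rewrite leq_maxr geq_max s_le_d ltnW.
Qed.

Definition Jpre_ideal : tsideal (lam D) := TSIdeal Jpre0 JpreB JpreMl JpreMr.

Lemma JpreD x y : Jpre s x -> Jpre s y -> Jpre s (x + y).
Proof. exact: (@tsidealD _ Jpre_ideal). Qed.

Lemma Jpre_sum (J : Type) (r : seq J) (P : pred J) (F : J -> lam D) :
  (forall j, P j -> Jpre s (F j)) -> Jpre s (\sum_(j <- r | P j) F j).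
Proof. exact: (@tsideal_sum _ Jpre_ideal). Qed.

Lemma N_Jpre x : N x -> Jpre s x.
Proof.
move=> Nx i j; have := Nx i j; rewrite widen_inord ord_max_inord; apply: dsI_le.
by rewrite geq_max s_le_d leqnn (ltnW (ltn_ord j)).
Qed.

End JpreIdeal.

Lemma Jpre_N x : Jpre d x -> N x.
Proof.
move=> Jx i j; have := Jx i j.
by rewrite (maxn_idPr (ltnW (ltn_ord j))) widen_inord ord_max_inord.
Qed.

Lemma JpreS s x : (s < d)%N -> Jpre s.+1 x -> Jpre s x.
Proof.
move=> sd Jx i j; apply: dsI_le (Jx i j).
by have := ltn_ord j; lia.
Qed.

Definition unit_lam_mx (a b : 'I_d) (r : R) : 'M[R]_d :=
  single_mx a b (if (b <= a)%N then r else 0).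

Lemma unit_lam_subproof a b r : lampred D (unit_lam_mx a b r).
Proof.
apply/pbP => i l; rewrite !mxE.
case: ifP => [/andP[/eqP -> /eqP ->]|_]; last exact: tsideal0.
by case: ifP => [ba|_]; [apply: dsI_full | apply: tsideal0].
Qed.

Definition unit_lam a b r : lam D := Lam (unit_lam_subproof a b r).

Lemma unit_lamE (a b : 'I_d) r : (b <= a)%N -> lamval (unit_lam a b r) = single_mx a b r.
Proof. by move=> ba; rewrite /= /unit_lam_mx ba. Qed.

Lemma elamE k : lamval (elam D k) = single_mx k k 1.
Proof. exact: delta_single_mx. Qed.

Lemma elam_Jpre s (k : 'I_d) : (s <= k)%N -> Jpre s (elam D k).
Proof.
move=> sk i j; rewrite elamE mxE.
case: ifP => [/andP[/eqP -> /eqP ->]|_]; last exact: tsideal0.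
by rewrite (maxn_idPl sk); apply: dsI_full_inord; rewrite leqnn ltnW.
Qed.

Definition Flam (s : nat) : lam D := \sum_(k < d | (s <= k)%N) elam D k.

Lemma fA_pi s : fA D s = qpi N (Flam s).
Proof. by rewrite /fA qpi_sum. Qed.

Lemma Flam_Jpre s : (s <= d)%N -> Jpre s (Flam s).
Proof. by move=> sd; apply: Jpre_sum => // k; apply: elam_Jpre. Qed.

Lemma mulmx_Flam s (A : 'M[R]_d) i l :
  (A *m lamval (Flam s)) i l = if (s <= l)%N then A i l else 0.
Proof.
rewrite lamval_sum mulmx_sumr summxE.
under eq_bigr => k _ do rewrite elamE mulmx_single mulr1 eq_sym.
by rewrite sum_ord_if_eq.
Qed.

Lemma JA_pi_mul s a b : JA D s (qpi N (a * Flam s * b)).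
Proof. by exists [:: (qpi N a, qpi N b)]; rewrite big_seq1 /= !qpiM fA_pi. Qed.

Lemma JA_Jpre s x : (s <= d)%N -> JA D s (qpi N x) -> Jpre s x.
Proof.
move=> sd [gens Egens].
pose y := \sum_(p <- gens) repr p.1 * Flam s * repr p.2.
have /qpiP Nxy : qpi N x = qpi N y.
  by rewrite Egens qpi_sum; apply: eq_bigr => p _; rewrite !qpiM -fA_pi !qpiK.
rewrite -(subrK y x); apply: JpreD => //; first exact: N_Jpre.
by apply: Jpre_sum => // p _; apply: JpreMr => //; apply: JpreMl => //; apply: Flam_Jpre.
Qed.

(* The membership test only makes [shift_col] land in [lam D]; it always
   succeeds when [j <= s] and [Jpre s x] (see [shift_colE]). *)
Definition shift_col_mx (s j : 'I_d) (x : lam D) : 'M[R]_d :=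
  \matrix_(i, l) if (l == s) && pb (I (w i) (w s) (lamval x i j)) then lamval x i j else 0.

Lemma shift_col_subproof s j x : lampred D (shift_col_mx s j x).
Proof.
apply/pbP => i l; rewrite mxE.
by case: ifP => [/andP[/eqP -> /pbP //]|_]; apply: tsideal0.
Qed.

Definition shift_col s j x : lam D := Lam (shift_col_subproof s j x).

Lemma shift_colE (s j : 'I_d) x i l : (j <= s)%N -> Jpre s x ->
  lamval (shift_col s j x) i l = if l == s then lamval x i j else 0.
Proof.
move=> js Jx; rewrite mxE; case: (l == s) => //=.
have := Jx i j; rewrite (maxn_idPr js) -!widen_inord.
by case: pbP.
Qed.

Lemma shift_col_unit_sum (s : 'I_d) (P : pred 'I_d) x i l :
  (forall j, P j -> (j <= s)%N) -> Jpre s x ->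
  lamval (\sum_(j | P j) shift_col s j x * unit_lam s j 1) i l =
  if P l then lamval x i l else 0.
Proof.
move=> Ps Jx; rewrite lamval_sum summxE.
under eq_bigr => j Pj do
  rewrite lamvalM unit_lamE ?Ps // mulmx_single shift_colE ?Ps // eqxx mulr1 eq_sym.
by rewrite sum_ord_if_eq.
Qed.

Lemma shift_col_Flam (s j : 'I_d) x : (j <= s)%N -> Jpre s x ->
  shift_col s j x * Flam s = shift_col s j x.
Proof.
move=> js Jx; apply: lam_inj; apply/matrixP => i l.
rewrite lamvalM mulmx_Flam shift_colE //.
by case: (leqP s l) => // ls; case: eqP => // ls'; rewrite ls' ltnn in ls.
Qed.

Lemma Jpre_JA s x : (s <= d)%N -> Jpre s x -> JA D s (qpi N x).
Proof.
move=> sd Jx; have [s_lt_d|d_le_s] := ltnP s d; last first.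
  have s_eq_d : s = d by apply/anti_leq; rewrite sd d_le_s.
  rewrite s_eq_d in Jx; have /qpi_eq0 -> := Jpre_N Jx.
  exact: tsideal0.
pose s' := Ordinal s_lt_d.
have lt_le (j : 'I_d) : (j < s')%N -> (j <= s')%N by apply: ltnW.
have -> : x = x * Flam s * 1 +
    \sum_(j < d | (j < s)%N) shift_col s' j x * Flam s * unit_lam s' j 1.
  apply: lam_inj; apply/matrixP => i l.
  under eq_bigr => j js do rewrite (shift_col_Flam (lt_le j js) Jx).
  rewrite lamvalDE mulr1 lamvalM mulmx_Flam (shift_col_unit_sum _ _ lt_le Jx).
  by case: leqP; rewrite ?addr0 ?add0r.
rewrite qpiD qpi_sum; apply: tsidealD; first exact: JA_pi_mul.
by apply: tsideal_sum => j _; apply: JA_pi_mul.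
Qed.

Lemma JA_piE s x : (s <= d)%N -> JA D s (qpi N x) <-> Jpre s x.
Proof. by move=> sd; split; [apply: JA_Jpre | apply: Jpre_JA]. Qed.

Lemma unit_lam_Jpre (a b : 'I_d) r : Jpre a (unit_lam a b r).
Proof.
move=> i j; rewrite !mxE.
case: ifP => [/andP[/eqP -> /eqP ->]|_]; last exact: tsideal0.
case: ifP => [ba|_]; last exact: tsideal0.
by rewrite (maxn_idPr ba); apply: dsI_full_inord; rewrite leqnn ltnW.
Qed.

Section ShiftColLinear.
Variables (s j : 'I_d) (j_le_s : (j <= s)%N).
Let s_le_d : (s <= d)%N := ltnW (ltn_ord s).

Lemma shift_colD x y : Jpre s x -> Jpre s y ->
  shift_col s j (x + y) = shift_col s j x + shift_col s j y.
Proof.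
move=> Jx Jy; apply: lam_inj; apply/matrixP => i l.
rewrite [LHS]shift_colE //; last exact: JpreD.
rewrite !lamvalDE !shift_colE //.
by case: (l == s); rewrite ?addr0.
Qed.

Lemma shift_colMl a x : Jpre s x -> shift_col s j (a * x) = a * shift_col s j x.
Proof.
move=> Jx; apply: lam_inj; apply/matrixP => i l.
rewrite [LHS]shift_colE //; last exact: JpreMl.
rewrite !lamvalME; under [in RHS]eq_bigr => k _ do rewrite shift_colE //.
by case: (l == s); rewrite // big1 // => k _; rewrite mulr0.
Qed.

Lemma shift_col_JpreS x y : Jpre s x -> Jpre s y -> Jpre s.+1 (x - y) ->
  Jpre s.+1 (shift_col s j x - shift_col s j y).
Proof.
move=> Jx Jy Jxy i l; rewrite lamvalBE !shift_colE //.
case: eqP => [->|_]; last by rewrite subr0; apply: tsideal0.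
have := Jxy i j; rewrite lamvalBE.
by rewrite (maxn_idPr (leqnSn s)) (maxn_idPr (leqW j_le_s)).
Qed.

End ShiftColLinear.

Lemma unit_lamB (k : 'I_d) r r' : unit_lam k k (r - r') = unit_lam k k r - unit_lam k k r'.
Proof.
apply: lam_inj; apply/matrixP => i l.
by rewrite lamvalBE !unit_lamE // !mxE; case: ifP; rewrite ?subr0.
Qed.

Lemma unit_lamM (k : 'I_d) r r' : unit_lam k k (r * r') = unit_lam k k r * unit_lam k k r'.
Proof.
apply: lam_inj; apply/matrixP => i l.
rewrite lamvalM !unit_lamE // mul_single_mx !mxE.
by rewrite eqxx; case: (i == k); case: (l == k); rewrite /= ?mulr0.
Qed.

Lemma unit_lam1 (k : 'I_d) : unit_lam k k 1 = elam D k.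
Proof. by apply: lam_inj; rewrite elamE unit_lamE. Qed.

Lemma elam_mul_elam (k : 'I_d) x : elam D k * x * elam D k = unit_lam k k (lamval x k k).
Proof.
apply: lam_inj; apply/matrixP => i l.
rewrite !lamvalM elamE unit_lamE // mulmx_single mul_single_mx mxE mulr1 mul1r.
by case: (i == k); case: (l == k).
Qed.

End Lambda.

Section Layer.
Variables (R : pzRingType) (d : nat) (D : dsystem R d) (t : 'I_d).
Local Notation I := (dsI D).
Local Notation w := (widen_ord (leqnSn d)).
Local Notation N := (Nideal D).
Local Notation M := (Jquot D t).
Let t_le_d : (t <= d)%N := ltnW (ltn_ord t).

Definition piJ (x : lam D) : AJ D t.+1 := qpi (JA D t.+1) (qpi N x).

Lemma piJD x y : piJ (x + y) = piJ x + piJ y.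
Proof. by rewrite /piJ !qpiD. Qed.

Lemma piJM x y : piJ (x * y) = piJ x * piJ y.
Proof. by rewrite /piJ !qpiM. Qed.

Lemma piJ_sum (J : Type) (r : seq J) (P : pred J) (F : J -> lam D) :
  piJ (\sum_(j <- r | P j) F j) = \sum_(j <- r | P j) piJ (F j).
Proof. by rewrite /piJ !qpi_sum. Qed.

Lemma piJK y : piJ (repr (repr y)) = y.
Proof. by rewrite /piJ !qpiK. Qed.

Lemma piJ_eq x y : piJ x = piJ y <-> Jpre t.+1 (x - y).
Proof. by rewrite /piJ qpiP -qpiB JA_piE. Qed.

Definition lift_Jquot (m : M) : lam D := repr (repr (imval m)).

Lemma lift_JquotK m : piJ (lift_Jquot m) = imval m.
Proof. exact: piJK. Qed.

Lemma lift_Jquot_Jpre m : Jpre t (lift_Jquot m).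
Proof.
have [a Ja Ea] : exists2 a, JA D t a & qpi _ a = imval m by case: m => y /= /pbP.
rewrite -[a]qpiK in Ja Ea.
have Jdiff : Jpre t (lift_Jquot m - repr a).
  by apply: JpreS => //; apply/piJ_eq; rewrite lift_JquotK -Ea.
by rewrite -(subrK (repr a) (lift_Jquot m)); apply: (JpreD t_le_d Jdiff); apply: JA_Jpre.
Qed.

Definition coord (j : 'I_d) (m : M) : AJ D t.+1 :=
  piJ (shift_col t j (lift_Jquot m)).

Lemma basis_subproof j :
  Lpred (imgideal (JA D t.+1) (JA D t)) (piJ (unit_lam D t j 1)).
Proof.
by apply/pbP; exists (qpi N (unit_lam D t j 1)); first apply/JA_piE/unit_lam_Jpre.
Qed.

Definition basis j : M := IdealMod (basis_subproof j).

Lemma imval_sum (J : Type) (r : seq J) (P : pred J) (F : J -> M) :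
  imval (\sum_(j <- r | P j) F j) = \sum_(j <- r | P j) imval (F j).
Proof. exact: (big_morph (@imval _ _) (fun x y => erefl) erefl). Qed.

Lemma coord_scalar (j : 'I_d) : (j <= t)%N -> scalar (coord j).
Proof.
move=> jt a m m'; have Jm := lift_Jquot_Jpre m; have Jm' := lift_Jquot_Jpre m'.
set x := repr (repr a) * lift_Jquot m + lift_Jquot m'.
have Jam : Jpre t (repr (repr a) * lift_Jquot m) := JpreMl _ Jm.
have /piJ_eq Jdiff : piJ (lift_Jquot (a *: m + m')) = piJ x.
  by rewrite piJD piJM !lift_JquotK piJK.
have -> : a * coord j m + coord j m' = piJ (shift_col t j x).
  by rewrite shift_colD // shift_colMl // piJD piJM piJK.
by apply/piJ_eq/shift_col_JpreS => //; [apply: lift_Jquot_Jpre | apply: (JpreD t_le_d)].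
Qed.

Lemma coord_expansion (m : M) : m = \sum_(j : 'I_d | (j <= t)%N) coord j m *: basis j.
Proof.
apply: val_inj; rewrite /= imval_sum -lift_JquotK.
have Jx := lift_Jquot_Jpre m.
transitivity
  (piJ (\sum_(j : 'I_d | (j <= t)%N) shift_col t j (lift_Jquot m) * unit_lam D t j 1)).
  apply/piJ_eq => i l; rewrite lamvalBE (shift_col_unit_sum _ _ (fun j jt => jt) Jx).
  case: leqP => [_|lt]; first by rewrite subrr; apply: tsideal0.
  by rewrite subr0 (maxn_idPl lt); apply: lamP_inord.
by rewrite piJ_sum; apply: eq_bigr => j _; rewrite piJM.
Qed.

Lemma Jquot_projective : projective M.
Proof. exact: dual_basis_projective coord_scalar coord_expansion. Qed.

Lemma corner_subproof r : cpred (eAJ D t) (piJ (unit_lam D t t r)).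
Proof.
apply/eqP; change (piJ (elam D t) * piJ (unit_lam D t t r) * piJ (elam D t) =
                   piJ (unit_lam D t t r)).
by rewrite -!piJM elam_mul_elam unit_lamE // mxE !eqxx.
Qed.

Definition corner_of r : corner (eAJ D t) := Corner (corner_subproof r).

Lemma lift0_inord : lift ord0 t = inord t.+1 :> 'I_d.+1.
Proof. by apply: val_inj; rewrite /= inordK // ltnS. Qed.

Lemma corner_of_eq r r' : corner_of r = corner_of r' <-> I (w t) (lift ord0 t) (r - r').
Proof.
rewrite widen_inord lift0_inord; split.
  move=> /(congr1 val)/piJ_eq/(_ t t).
  by rewrite -unit_lamB unit_lamE // mxE !eqxx (maxn_idPr (leqnSn t)).
move=> Irr'; apply: val_inj; apply/piJ_eq => i l.
rewrite -unit_lamB unit_lamE // mxE.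
case: ifP => [/andP[/eqP -> /eqP ->]|_]; last exact: tsideal0.
by rewrite (maxn_idPr (leqnSn t)).
Qed.

Definition RI_to_corner (q : RI D t) : corner (eAJ D t) := corner_of (repr q).

Lemma RI_to_corner_pi r : RI_to_corner (qpi _ r) = corner_of r.
Proof. by apply/corner_of_eq; apply: repr_pi. Qed.

Lemma RI_to_corner_zmod : zmod_morphism RI_to_corner.
Proof.
move=> q q'; have [r <-] := qpi_surj q; have [r' <-] := qpi_surj q'.
by rewrite -qpiB !RI_to_corner_pi; apply: val_inj; rewrite /= unit_lamB /piJ !qpiB.
Qed.

Lemma RI_to_corner_monoid : monoid_morphism RI_to_corner.
Proof.
split; first by rewrite -(qpi1 (I _ _)) RI_to_corner_pi; apply: val_inj; rewrite /= unit_lam1.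
move=> q q'; have [r <-] := qpi_surj q; have [r' <-] := qpi_surj q'.
by rewrite -qpiM !RI_to_corner_pi; apply: val_inj; rewrite /= unit_lamM piJM.
Qed.

HB.instance Definition _ :=
  GRing.isZmodMorphism.Build (RI D t) (corner (eAJ D t)) RI_to_corner RI_to_corner_zmod.
HB.instance Definition _ :=
  GRing.isMonoidMorphism.Build (RI D t) (corner (eAJ D t)) RI_to_corner RI_to_corner_monoid.

Lemma RI_to_corner_inj : injective RI_to_corner.
Proof.
move=> q q'; have [r <-] := qpi_surj q; have [r' <-] := qpi_surj q'.
by rewrite !RI_to_corner_pi => /corner_of_eq Irr'; apply/qpiP.
Qed.

Definition corner_to_RI (c : corner (eAJ D t)) : RI D t :=
  qpi _ (lamval (repr (repr (cval c))) t t).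

Lemma corner_to_RIK : cancel corner_to_RI RI_to_corner.
Proof.
move=> [y /= y_corner]; rewrite /corner_to_RI RI_to_corner_pi; apply: val_inj => /=.
by rewrite -elam_mul_elam !piJM piJK; apply/eqP.
Qed.

Lemma RI_to_corner_bij : bijective RI_to_corner.
Proof.
exists corner_to_RI; last exact: corner_to_RIK.
exact: inj_can_sym corner_to_RIK RI_to_corner_inj.
Qed.

End Layer.

Theorem theorem3p6 (R : pzRingType) (d : nat) (D : dsystem R d) (t : 'I_d) :
  projective (Jquot D t) /\
  exists phi : {rmorphism RI D t -> corner (eAJ D t)}, bijective phi.
Proof.
split; first exact: Jquot_projective.
by exists (@RI_to_corner _ _ D t); apply: RI_to_corner_bij.
Qed.
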